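(* There is a Katětov functor $F\colon\mathcal U_{\mathrm{fin}}\to\mathcal U_{\mathrm{fin}}$, i.e. a functor $F$ together with a natural transformation $\eta\colon\mathrm{id}_{\mathcal U_{\mathrm{fin}}}\to F$ such that for every finite two-sorted ultrametric space $X$ and every one-point extension $f\colon X\to Y$ there is a dc-embedding $g\colon Y\to F(X)$ with $g\circ f=\eta_X$.
   Context: A two-sorted ultrametric space is $(X,d_X,D_X)$ with $D_X$ a linear order with least element $0$, $d_X\colon X\times X\to D_X$ symmetric, $d_X(x,y)=0\iff x=y$, $d_X(x,z)\le\max\{d_X(x,y),d_X(y,z)\}$; finite if both sorts are finite. $\mathcal U_{\mathrm{fin}}$ is the category of finite two-sorted ultrametric spaces with dc-embeddings (an injection $f$ on points with an order embedding $D_f$ of distance sets fixing $0$ such that $d(f(x),f(x'))=D_f(d(x,x'))$). A one-point extension is a dc-embedding between finite spaces that (up to isomorphism) either adds exactly one new distance and no new points, or adds exactly one new point and no new distances. *)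

From HB Require Import structures.
From mathcomp Require Import all_boot.
Set Implicit Arguments.
Unset Strict Implicit.
Unset Printing Implicit Defensive.

Record FinUltra := {
  pts : finType;
  dst : finType;
  dle : rel dst;
  dzero : dst;
  dle_refl : forall a, dle a a;
  dle_anti : forall a b, dle a b -> dle b a -> a = b;
  dle_trans : forall a b c, dle a b -> dle b c -> dle a c;
  dle_total : forall a b, dle a b || dle b a;
  dzero_least : forall a, dle dzero a;
  d : pts -> pts -> dst;
  d_sym : forall x y, d x y = d y x;
  d_zero : forall x y, d x y = dzero <-> x = y;
  d_ultra : forall x y z, dle (d x z) (d x y) || dle (d x z) (d y z)
}.

Record dcEmb (X Y : FinUltra) := {
  emb_pt : pts X -> pts Y;
  emb_d : dst X -> dst Y;
  emb_pt_inj : injective emb_pt;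
  emb_d_order : forall a b, dle (emb_d a) (emb_d b) = dle a b;
  emb_d_zero : emb_d (dzero X) = dzero Y;
  emb_dist : forall x x', d (emb_pt x) (emb_pt x') = emb_d (d x x')
}.

Definition emb_eq (X Y : FinUltra) (f g : dcEmb X Y) : Prop :=
  (forall x, emb_pt f x = emb_pt g x) /\ (forall a, emb_d f a = emb_d g a).

Lemma dcEmb_id_proof (X : FinUltra) :
  forall a b : dst X, dle (id a) (id b) = dle a b.
Proof. by []. Qed.

Definition dc_id (X : FinUltra) : dcEmb X X :=
  @Build_dcEmb X X id id (@inj_id _) (@dcEmb_id_proof X) erefl (fun _ _ => erefl).

Section Comp.
Variables (X Y Z : FinUltra) (g : dcEmb Y Z) (f : dcEmb X Y).
Lemma dc_comp_inj : injective (emb_pt g \o emb_pt f).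
Proof. by move=> x y /= /(@emb_pt_inj _ _ g)/(@emb_pt_inj _ _ f). Qed.
Lemma dc_comp_order :
  forall a b, dle ((emb_d g \o emb_d f) a) ((emb_d g \o emb_d f) b) = dle a b.
Proof. by move=> a b /=; rewrite !emb_d_order. Qed.
Lemma dc_comp_zero : (emb_d g \o emb_d f) (dzero X) = dzero Z.
Proof. by rewrite /= !emb_d_zero. Qed.
Lemma dc_comp_dist : forall x x',
  d ((emb_pt g \o emb_pt f) x) ((emb_pt g \o emb_pt f) x')
  = (emb_d g \o emb_d f) (d x x').
Proof. by move=> x x' /=; rewrite !emb_dist. Qed.
Definition dc_comp : dcEmb X Z :=
  Build_dcEmb dc_comp_inj dc_comp_order dc_comp_zero dc_comp_dist.
End Comp.

Record UFunctor := {
  Fobj : FinUltra -> FinUltra;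
  Fmor : forall X Y, dcEmb X Y -> dcEmb (Fobj X) (Fobj Y);
  Fmor_id : forall X, emb_eq (Fmor (dc_id X)) (dc_id (Fobj X));
  Fmor_comp : forall X Y Z (g : dcEmb Y Z) (f : dcEmb X Y),
      emb_eq (Fmor (dc_comp g f)) (dc_comp (Fmor g) (Fmor f))
}.

Definition natural_from_id (F : UFunctor) (eta : forall X, dcEmb X (Fobj F X))
  : Prop :=
  forall X Y (f : dcEmb X Y),
    emb_eq (dc_comp (eta Y) f) (dc_comp (Fmor F f) (eta X)).

Definition one_point_ext (X Y : FinUltra) (f : dcEmb X Y) : Prop :=
  (bijective (emb_pt f) /\ #|[predC codom (emb_d f)]| = 1)
  \/ (bijective (emb_d f) /\ #|[predC codom (emb_pt f)]| = 1).

(* The functor sends X to a finite Katetov space: its points are the Katetov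
   functions u : X -> D_X, i.e. u x <= max (d x y) (u y) and
   d x y <= max (u x) (u y), at distance min_x max (u x) (v x) from each other,
   plus one extra point (the only one when X is empty); its distance set is D_X
   with a new distance inserted just above each element and a new top distance.
   An embedding f acts by the push-forward u |-> (z |-> min_x max (f (u x)) (d (f x) z)),
   which extends u along f, and the unit sends x to d x.  A one-point extension
   f : X -> Y embeds into F X over the unit: a point y goes to the Katetov
   function x |-> d (f x) y, and a new distance c goes to the new distance just
   above the largest a with f a <= c. *)

From mathcomp Require Import all_boot zify.
Set Implicit Arguments.
Unset Strict Implicit.
Unset Printing Implicit Defensive.

Section DistanceRank.
Variable X : FinUltra.
Implicit Types (a b c : dst X) (x y z : pts X).

Definition drank a := #|[pred b | dle b a]|.

Lemma dle_rank a b : dle a b = (drank a <= drank b).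
Proof.
apply/idP/idP => [ab|].
  by apply/subset_leq_card/subsetP => c; rewrite !inE => /dle_trans; apply.
apply: contraLR => nab; rewrite -ltnNge.
have ba : dle b a by move: (dle_total a b); rewrite (negbTE nab).
apply/proper_card; rewrite properE; apply/andP; split.
  by apply/subsetP => c; rewrite !inE => /dle_trans; apply.
by apply/subsetPn; exists a; rewrite !inE ?dle_refl.
Qed.

Lemma drank_inj : injective drank.
Proof. by move=> a b e; apply: dle_anti; rewrite dle_rank e. Qed.

Lemma neq_dle a b : a != b -> dle a b = ~~ dle b a.
Proof. by move=> ab; rewrite !dle_rank -ltnNge ltn_neqAle (inj_eq drank_inj) ab. Qed.

Lemma drank_dzero : drank (dzero X) = 1.
Proof.
rewrite -(card1 (dzero X)); apply: eq_card => a; rewrite !inE.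
by apply/idP/eqP => [a0|->]; [exact: dle_anti (dzero_least a) | exact: dle_refl].
Qed.

Lemma drank_gt0 a : 0 < drank a.
Proof. by apply/card_gt0P; exists a; rewrite inE dle_refl. Qed.

Lemma drank_le_card a : drank a <= #|dst X|.
Proof. exact: max_card. Qed.

Definition dmax a b := if dle a b then b else a.

Lemma drank_max a b : drank (dmax a b) = maxn (drank a) (drank b).
Proof. by rewrite /dmax dle_rank; case: leqP => h; lia. Qed.

Lemma dmaxC a b : dmax a b = dmax b a.
Proof. by apply: drank_inj; rewrite !drank_max maxnC. Qed.

Lemma dxx x : d x x = dzero X.
Proof. exact/(d_zero x x).2. Qed.

Lemma drank_dxx x : drank (d x x) = 1.
Proof. by rewrite dxx drank_dzero. Qed.

Lemma drank_ultra x y z : drank (d x z) <= maxn (drank (d x y)) (drank (d y z)).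
Proof. by rewrite leq_max -!dle_rank d_ultra. Qed.

(* The junk value [dzero X] is returned when [T] is empty. *)
Definition dmin (T : finType) (g : T -> dst X) : dst X :=
  odflt (dzero X) [pick a | [exists t, g t == a] && [forall t, dle a (g t)]].

Section Minimum.
Variables (T : finType) (g : T -> dst X).

Lemma dmin_spec (t0 : T) : (exists t, dmin g = g t) /\ (forall t, dle (dmin g) (g t)).
Proof.
rewrite /dmin; case: pickP => [a /andP[/existsP[t /eqP <-] /forallP min_t]|none] /=.
  by split; [exists t|].
have [t _ min_t] := @arg_minnP _ t0 xpredT (fun t => drank (g t)) isT.
have := none (g t); rewrite /=.
have -> : [exists t', g t' == g t] by apply/existsP; exists t.
suff -> : [forall s, dle (g t) (g s)] by [].
by apply/forallP => s; rewrite dle_rank min_t.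
Qed.

Lemma dmin_attained (t0 : T) : exists t, dmin g = g t.
Proof. exact: (dmin_spec t0).1. Qed.

Lemma dmin_le t : drank (dmin g) <= drank (g t).
Proof. by rewrite -dle_rank; apply: (dmin_spec t).2. Qed.

Lemma dmin_eq a : (forall t, drank a <= drank (g t)) ->
  (exists t, drank (g t) <= drank a) -> dmin g = a.
Proof.
move=> lb [t gt]; have [t' e] := dmin_attained t.
apply: drank_inj; apply/eqP; rewrite eqn_leq (leq_trans (dmin_le t) gt) /=.
by rewrite e lb.
Qed.

End Minimum.

Lemma eq_dmin (T : finType) (g h : T -> dst X) : g =1 h -> dmin g = dmin h.
Proof.
move=> gh; rewrite /dmin; congr odflt; apply: eq_pick => a /=.
by congr andb; [apply: eq_existsb | apply: eq_forallb] => t; rewrite gh.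
Qed.

End DistanceRank.

Section Embedding.
Variables (X Y : FinUltra) (f : dcEmb X Y).
Implicit Types a b c : dst X.

Lemma drank_emb a b : (drank (emb_d f a) <= drank (emb_d f b)) = (drank a <= drank b).
Proof. by rewrite -!dle_rank emb_d_order. Qed.

Lemma drank_emb_max a b c :
  (drank (emb_d f a) <= maxn (drank (emb_d f b)) (drank (emb_d f c)))
  = (drank a <= maxn (drank b) (drank c)).
Proof. by rewrite !leq_max !drank_emb. Qed.

Lemma emb_d_inj : injective (emb_d f).
Proof. by move=> a b e; apply: drank_inj; apply/eqP; rewrite eqn_leq -!drank_emb e !leqnn. Qed.

Lemma emb_dmax a b : emb_d f (dmax a b) = dmax (emb_d f a) (emb_d f b).
Proof. by rewrite /dmax emb_d_order; case: ifP. Qed.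

Lemma emb_dmin (T : finType) (g : T -> dst X) : emb_d f (dmin g) = dmin (emb_d f \o g).
Proof.
have [t0 _|T0] := pickP (@predT T).
  apply/esym/dmin_eq => [t|]; first by rewrite drank_emb dmin_le.
  by have [t ->] := dmin_attained g t0; exists t.
have dmin0 (Z : FinUltra) (h : T -> dst Z) : dmin h = dzero Z.
  by rewrite /dmin; case: pickP => [a /andP[/existsP[t _] _]|//]; have := T0 t.
by rewrite !dmin0 emb_d_zero.
Qed.

End Embedding.

Lemma emb_pt_comp (X Y Z : FinUltra) (g : dcEmb Y Z) (f : dcEmb X Y) x :
  emb_pt (dc_comp g f) x = emb_pt g (emb_pt f x).
Proof. by []. Qed.

Lemma emb_d_comp (X Y Z : FinUltra) (g : dcEmb Y Z) (f : dcEmb X Y) a :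
  emb_d (dc_comp g f) a = emb_d g (emb_d f a).
Proof. by []. Qed.

Section Katetov.
Variable X : FinUltra.
Implicit Types x y z : pts X.

(* Over the empty space the empty function is excluded: its push-forward
   along an embedding would not be Katetov. *)
Definition katetov (u : {ffun pts X -> dst X}) : bool :=
  [forall x, forall y, dle (u x) (dmax (d x y) (u y)) && dle (d x y) (dmax (u x) (u y))]
  && (0 < #|pts X|).

Lemma katetovP (u : {ffun pts X -> dst X}) : reflect
  [/\ 0 < #|pts X|,
      forall x y, drank (u x) <= maxn (drank (d x y)) (drank (u y)) &
      forall x y, drank (d x y) <= maxn (drank (u x)) (drank (u y))]
  (katetov u).
Proof.
rewrite /katetov; apply: (iffP andP) => [[/forallP uK n]|[n uL uT]].
  by split=> // x y; have /forallP/(_ y)/andP[] := uK x; rewrite !dle_rank !drank_max.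
split=> //; apply/forallP => x; apply/forallP => y.
by rewrite !dle_rank !drank_max uL uT.
Qed.

Definition katetov_fun := {u | katetov u}.
Implicit Types u v w : katetov_fun.

Lemma katetov_card_gt0 v : 0 < #|pts X|.
Proof. by case/katetovP: (valP v). Qed.

Lemma katetov_lipschitz v x y :
  drank (val v x) <= maxn (drank (d x y)) (drank (val v y)).
Proof. by case/katetovP: (valP v) => _ ->. Qed.

Lemma katetov_triangle v x y :
  drank (d x y) <= maxn (drank (val v x)) (drank (val v y)).
Proof. by case/katetovP: (valP v) => _ _ ->. Qed.

Lemma katetov_dmin v x : dmin (fun y => dmax (val v y) (d y x)) = val v x.
Proof.
apply: dmin_eq => [y|]; first by rewrite drank_max d_sym maxnC katetov_lipschitz.
by exists x; rewrite drank_max drank_dxx; have := drank_gt0 (val v x); lia.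
Qed.

Lemma katetov_eq_dist v x : val v x = dzero X -> forall y, val v y = d x y.
Proof.
move=> vx0 y; apply: drank_inj.
have := katetov_lipschitz v y x; have := katetov_triangle v x y.
rewrite (d_sym y x) vx0 drank_dzero.
by have := drank_gt0 (d x y); have := drank_gt0 (val v y); lia.
Qed.

Definition kpoint_fun x : {ffun pts X -> dst X} := [ffun y => d x y].

Lemma katetov_kpoint_fun x : katetov (kpoint_fun x).
Proof.
apply/katetovP; split=> [|y z|y z]; rewrite ?ffunE; first by apply/card_gt0P; exists x.
  by rewrite (d_sym y z) maxnC drank_ultra.
by rewrite (d_sym x y) drank_ultra.
Qed.

Definition kpoint x : katetov_fun := exist _ (kpoint_fun x) (katetov_kpoint_fun x).

Lemma kpoint_inj : injective kpoint.
Proof.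
by move=> x y /(congr1 val)/ffunP/(_ x); rewrite !ffunE dxx => /esym/(d_zero y x).1 ->.
Qed.

Definition kdist v w : dst X := dmin (fun x => dmax (val v x) (val w x)).

Lemma kdist_sym v w : kdist v w = kdist w v.
Proof. by apply: eq_dmin => x; rewrite dmaxC. Qed.

Lemma kdist_eq0 v w : kdist v w = dzero X -> v = w.
Proof.
have /card_gt0P[x0 _] := katetov_card_gt0 v; rewrite /kdist.
have [x ->] := dmin_attained (fun x => dmax (val v x) (val w x)) x0.
move/(congr1 (@drank X)); rewrite drank_max drank_dzero => /eqP.
rewrite eqn_leq geq_max => /andP[/andP[v1 w1] _].
have zero (t : dst X) : drank t <= 1 -> t = dzero X.
  by move=> t1; apply: drank_inj; apply/eqP; rewrite drank_dzero eqn_leq t1 drank_gt0.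
apply: val_inj; apply/ffunP => y.
by rewrite (katetov_eq_dist (zero _ v1)) (katetov_eq_dist (zero _ w1)).
Qed.

Lemma kdist_ultra u v w :
  drank (kdist u w) <= maxn (drank (kdist u v)) (drank (kdist v w)).
Proof.
have /card_gt0P[x0 _] := katetov_card_gt0 u; rewrite /kdist.
have [x ->] := dmin_attained (fun x => dmax (val u x) (val v x)) x0.
have [y ->] := dmin_attained (fun x => dmax (val v x) (val w x)) x0.
have := dmin_le (fun x => dmax (val u x) (val w x)) x.
have := katetov_lipschitz w x y; have := katetov_triangle v x y.
rewrite !drank_max; lia.
Qed.

Lemma kdist_kpoint x y : kdist (kpoint x) (kpoint y) = d x y.
Proof.
apply: dmin_eq => [z|]; first by rewrite /= !ffunE drank_max (d_sym y z) drank_ultra.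
exists x; rewrite /= !ffunE drank_max drank_dxx (d_sym y x).
by have := drank_gt0 (d x y); lia.
Qed.

(* The Katetov space: its points are the Katetov functions and an extra point
   [None], at the new largest distance [None] from all of them; besides the
   distances [Some (a, false)] of [X] it has a new distance [Some (a, true)]
   just above each [a]. *)
Definition kpt := option katetov_fun.
Definition kdst := option (dst X * bool).

Definition kcode (a : kdst) : nat :=
  if a is Some (a, b) then 2 * drank a + b else 2 * #|dst X| + 2.

Definition kle (a b : kdst) : bool := kcode a <= kcode b.
Definition kzero : kdst := Some (dzero X, false).

Lemma kcode_inj : injective kcode.
Proof.
case=> [[a b]|] [[a' b']|] //= e.
- have ra : drank a = drank a' by case: b b' e => [] [] /= e; lia.
  have -> : b = b' by case: b b' e => [] [] //= e; lia.
  by rewrite (drank_inj ra).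
- by have := drank_le_card a; case: b e => /= e; lia.
- by have := drank_le_card a'; case: b' e => /= e; lia.
Qed.

Lemma kle_refl a : kle a a. Proof. exact: leqnn. Qed.

Lemma kle_anti a b : kle a b -> kle b a -> a = b.
Proof. by move=> ab ba; apply/kcode_inj/anti_leq/andP. Qed.

Lemma kle_trans a b c : kle a b -> kle b c -> kle a c.
Proof. exact: leq_trans. Qed.

Lemma kle_total a b : kle a b || kle b a.
Proof. exact: leq_total. Qed.

Lemma kle_top a : kle a None.
Proof.
case: a => [[a b]|]; last exact: kle_refl.
by rewrite /kle /=; have := drank_le_card a; case: b => /=; lia.
Qed.

Lemma kle_None_Some a b : kle None (Some (a, b)) = false.
Proof. by rewrite /kle /=; have := drank_le_card a; case: b => /=; lia. Qed.

Lemma kzero_least a : kle kzero a.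
Proof.
case: a => [[a b]|]; last exact: kle_top.
by rewrite /kle /= drank_dzero; have := drank_gt0 a; case: b => /=; lia.
Qed.

Definition kd (p q : kpt) : kdst :=
  match p, q with
  | Some v, Some w => if v == w then kzero else Some (kdist v w, false)
  | None, None => kzero
  | _, _ => None
  end.

Lemma kd_sym p q : kd p q = kd q p.
Proof. by case: p q => [v|] [w|] //=; rewrite eq_sym kdist_sym. Qed.

Lemma kdxx p : kd p p = kzero.
Proof. by case: p => [v|] //=; rewrite eqxx. Qed.

Lemma kd_eq0 p q : kd p q = kzero <-> p = q.
Proof.
split=> [|->]; last exact: kdxx.
case: p q => [v|] [w|] //=; case: eqP => [-> //|_ [] /kdist_eq0 -> //].
Qed.

Lemma kd_ultra p q r : kle (kd p r) (kd p q) || kle (kd p r) (kd q r).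
Proof.
case: p q r => [u|] [v|] [w|]; rewrite ?kdxx ?kzero_least ?kle_top ?orbT //=.
case: (eqVneq u w) => [->|uw]; first by rewrite kzero_least.
case: (eqVneq v w) => [->|vw]; first by rewrite (negbTE uw) kle_refl.
case: (eqVneq u v) => [->|uv]; first by rewrite kle_refl orbT.
by rewrite /kle /= !addn0 !leq_mul2l /= -leq_max kdist_ultra.
Qed.

Definition katetov_space : FinUltra :=
  @Build_FinUltra kpt kdst kle kzero kle_refl kle_anti kle_trans kle_total
    kzero_least kd kd_sym kd_eq0 kd_ultra.

End Katetov.

Lemma lex_code_mono (m n m' n' : nat) (b b' : bool) :
  (m <= n) = (m' <= n') -> (n <= m) = (n' <= m') ->
  (2 * m + b <= 2 * n + b') = (2 * m' + b <= 2 * n' + b').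
Proof.
by case: (leqP m n) (leqP n m) (leqP m' n') (leqP n' m') => [] // ? [] ? [] ? [] ? //= _ _;
  case: b b' => [] []; apply/idP/idP; lia.
Qed.

Section PushForward.
Variables (X Y : FinUltra) (f : dcEmb X Y).
Implicit Types (u v : katetov_fun X) (x : pts X) (z : pts Y).

Definition kpush_fun u : {ffun pts Y -> dst Y} :=
  [ffun z => dmin (fun x => dmax (emb_d f (val u x)) (d (emb_pt f x) z))].

Lemma kpush_fun_le u z x :
  drank (kpush_fun u z) <= maxn (drank (emb_d f (val u x))) (drank (d (emb_pt f x) z)).
Proof.
by rewrite ffunE -drank_max (dmin_le (fun x => dmax (emb_d f (val u x)) (d (emb_pt f x) z))).
Qed.

Lemma kpush_fun_attained u z :
  exists x, kpush_fun u z = dmax (emb_d f (val u x)) (d (emb_pt f x) z).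
Proof.
have /card_gt0P[x0 _] := katetov_card_gt0 u; rewrite ffunE.
exact: (dmin_attained (fun x => dmax (emb_d f (val u x)) (d (emb_pt f x) z)) x0).
Qed.

Lemma kpush_fun_emb u x : kpush_fun u (emb_pt f x) = emb_d f (val u x).
Proof.
rewrite ffunE -[in RHS](katetov_dmin u x) emb_dmin; apply: eq_dmin => t.
by rewrite /= emb_dmax emb_dist.
Qed.

Lemma katetov_kpush_fun u : katetov (kpush_fun u).
Proof.
have /card_gt0P[x0 _] := katetov_card_gt0 u.
apply/katetovP; split=> [|z z'|z z']; first by apply/card_gt0P; exists (emb_pt f x0).
- have [x ->] := kpush_fun_attained u z'; rewrite drank_max.
  have := kpush_fun_le u z x; have := drank_ultra (emb_pt f x) z' z.
  by rewrite (d_sym z' z); lia.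
- have [x ->] := kpush_fun_attained u z; have [y ->] := kpush_fun_attained u z'.
  have tri := katetov_triangle u x y; rewrite -(drank_emb_max f) -emb_dist in tri.
  have := drank_ultra z (emb_pt f x) z'; have := drank_ultra (emb_pt f x) (emb_pt f y) z'.
  by rewrite !drank_max (d_sym z (emb_pt f x)); lia.
Qed.

Definition kpush u : katetov_fun Y := exist _ (kpush_fun u) (katetov_kpush_fun u).

Lemma kpush_inj : injective kpush.
Proof.
move=> u v /(congr1 val) /= e; apply: val_inj; apply/ffunP => x.
by apply: (emb_d_inj (f := f)); rewrite -!kpush_fun_emb e.
Qed.

Lemma kdist_kpush u v : kdist (kpush u) (kpush v) = emb_d f (kdist u v).
Proof.
have /card_gt0P[x0 _] := katetov_card_gt0 u.
have [x ex] := dmin_attained (fun x => dmax (val u x) (val v x)) x0.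
rewrite /kdist ex; apply: dmin_eq => [z|]; last first.
  by exists (emb_pt f x); rewrite /= !kpush_fun_emb emb_dmax.
rewrite /=; have [y ->] := kpush_fun_attained u z; have [y' ->] := kpush_fun_attained v z.
have min_y : drank (emb_d f (dmax (val u x) (val v x)))
             <= drank (emb_d f (dmax (val u y) (val v y))).
  by rewrite drank_emb -ex (dmin_le (fun x => dmax (val u x) (val v x)) y).
have lip := katetov_lipschitz v y y'; rewrite -(drank_emb_max f) -emb_dist in lip.
have := drank_ultra (emb_pt f y) z (emb_pt f y').
move: min_y; rewrite !emb_dmax !drank_max (d_sym z (emb_pt f y')); lia.
Qed.

End PushForward.

Lemma kpush_id (X : FinUltra) (u : katetov_fun X) : kpush (dc_id X) u = u.
Proof. by apply: val_inj; apply/ffunP => x; apply: (kpush_fun_emb (dc_id X) u x). Qed.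

Lemma kpush_comp (X Y Z : FinUltra) (g : dcEmb Y Z) (f : dcEmb X Y) (u : katetov_fun X) :
  kpush (dc_comp g f) u = kpush g (kpush f u).
Proof.
apply: val_inj; apply/ffunP => w; rewrite [LHS]ffunE.
apply: dmin_eq => [x|].
  have := kpush_fun_le g (kpush f u) w (emb_pt f x).
  by rewrite /= kpush_fun_emb drank_max.
have [z ->] := kpush_fun_attained g (kpush f u) w.
have [x ex] := kpush_fun_attained f u z; exists x.
have := drank_ultra (emb_pt g (emb_pt f x)) (emb_pt g z) w.
rewrite emb_d_comp emb_pt_comp -[val (kpush f u) z]/(kpush_fun f u z) ex.
by rewrite emb_dmax -emb_dist !drank_max; lia.
Qed.

Section KatetovMap.
Variables (X Y : FinUltra) (f : dcEmb X Y).

Definition kmap_pt (p : kpt X) : kpt Y := omap (kpush f) p.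
Definition kmap_dst (a : kdst X) : kdst Y := omap (fun ab => (emb_d f ab.1, ab.2)) a.

Lemma kmap_pt_inj : injective kmap_pt.
Proof. by case=> [u|] [v|] //= /Some_inj/(@kpush_inj _ _ f) ->. Qed.

Lemma kmap_dst_order a b : kle (kmap_dst a) (kmap_dst b) = kle a b.
Proof.
case: a b => [[a s]|] [[b t]|]; rewrite /= ?kle_top ?kle_None_Some //.
by rewrite /kle /=; apply: lex_code_mono; rewrite drank_emb.
Qed.

Lemma kmap_dst_zero : kmap_dst (kzero X) = kzero Y.
Proof. by rewrite /= emb_d_zero. Qed.

Lemma kmap_dist p q : kd (kmap_pt p) (kmap_pt q) = kmap_dst (kd p q).
Proof.
case: p q => [u|] [v|] //=; last by rewrite emb_d_zero.
by rewrite (inj_eq (@kpush_inj _ _ f)); case: eqP => _ /=; rewrite ?emb_d_zero ?kdist_kpush.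
Qed.

Definition kmap : dcEmb (katetov_space X) (katetov_space Y) :=
  @Build_dcEmb (katetov_space X) (katetov_space Y) kmap_pt kmap_dst
    kmap_pt_inj kmap_dst_order kmap_dst_zero kmap_dist.

End KatetovMap.

Lemma kmap_id (X : FinUltra) : emb_eq (kmap (dc_id X)) (dc_id (katetov_space X)).
Proof. by split=> [[u|]|[[a b]|]] //=; rewrite kpush_id. Qed.

Lemma kmap_comp (X Y Z : FinUltra) (g : dcEmb Y Z) (f : dcEmb X Y) :
  emb_eq (kmap (dc_comp g f)) (dc_comp (kmap g) (kmap f)).
Proof. by split=> [[u|]|[[a b]|]] //=; rewrite kpush_comp. Qed.

Definition katetov_functor : UFunctor :=
  @Build_UFunctor katetov_space (fun X Y f => kmap f) kmap_id kmap_comp.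

Section Unit.
Variable X : FinUltra.

Definition kunit_pt (x : pts X) : kpt X := Some (kpoint x).
Definition kunit_dst (a : dst X) : kdst X := Some (a, false).

Lemma kunit_pt_inj : injective kunit_pt.
Proof. by move=> x y /Some_inj/kpoint_inj. Qed.

Lemma kunit_dst_order a b : kle (kunit_dst a) (kunit_dst b) = dle a b.
Proof. by rewrite /kle /= !addn0 leq_mul2l dle_rank. Qed.

Lemma kunit_dist x y : kd (kunit_pt x) (kunit_pt y) = kunit_dst (d x y).
Proof.
rewrite /= (inj_eq (@kpoint_inj X)); case: eqP => [->|_]; first by rewrite dxx.
by rewrite kdist_kpoint.
Qed.

Definition kunit : dcEmb X (katetov_space X) :=
  @Build_dcEmb X (katetov_space X) kunit_pt kunit_dst
    kunit_pt_inj kunit_dst_order (erefl (kzero X)) kunit_dist.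

End Unit.

Lemma kpush_kpoint (X Y : FinUltra) (f : dcEmb X Y) (x : pts X) :
  kpush f (kpoint x) = kpoint (emb_pt f x).
Proof.
apply: val_inj; apply/ffunP => z; rewrite /= !ffunE.
apply: dmin_eq => [t|]; first by rewrite /= ffunE drank_max -emb_dist drank_ultra.
exists x; rewrite /= ffunE drank_max -emb_dist drank_dxx.
by have := drank_gt0 (d (emb_pt f x) z); lia.
Qed.

Lemma kunit_natural : @natural_from_id katetov_functor kunit.
Proof. by move=> X Y f; split=> [x|a] //=; rewrite kpush_kpoint. Qed.

Section OnePointExtension.
Variables (X Y : FinUltra) (f : dcEmb X Y).
Implicit Types (a : dst X) (c : dst Y) (x : pts X) (y : pts Y).

Definition dfloor c : dst X := [arg max_(a > dzero X | dle (emb_d f a) c) drank a].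

Lemma dle_dfloor a c : dle (emb_d f a) c = dle a (dfloor c).
Proof.
rewrite /dfloor; case: arg_maxnP => [|p fp max_p]; first by rewrite emb_d_zero dzero_least.
apply/idP/idP => [/max_p|ap]; first by rewrite dle_rank.
by apply: dle_trans fp; rewrite emb_d_order.
Qed.

Lemma dfloor_emb a : dfloor (emb_d f a) = a.
Proof.
apply: dle_anti; first by rewrite -(emb_d_order f) dle_dfloor dle_refl.
by rewrite -dle_dfloor dle_refl.
Qed.

Lemma emb_dfloor c : c \in codom (emb_d f) -> emb_d f (dfloor c) = c.
Proof. by case/codomP => a ->; rewrite dfloor_emb. Qed.

Definition kext_dst c : kdst X := Some (dfloor c, c \notin codom (emb_d f)).

Lemma kext_dst_zero : kext_dst (dzero Y) = kzero X.
Proof. by rewrite /kext_dst -(emb_d_zero f) dfloor_emb codom_f. Qed.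

Hypothesis new_dst_unique : {in [predC codom (emb_d f)] &, forall c c' : dst Y, c = c'}.

Lemma kext_dst_order c c' : kle (kext_dst c) (kext_dst c') = dle c c'.
Proof.
rewrite /kle /=.
case: (boolP (c \in codom _)) => [/codomP[a ->]|new];
  case: (boolP (c' \in codom _)) => [/codomP[a' ->]|new'] /=; rewrite ?dfloor_emb.
- by rewrite emb_d_order dle_rank !addn0 leq_mul2l.
- by rewrite dle_dfloor dle_rank addn0; apply/idP/idP; lia.
- have neq : emb_d f a' != c by apply: contraNneq new => <-; exact: codom_f.
  by rewrite neq_dle 1?eq_sym // dle_dfloor dle_rank -ltnNge addn0; apply/idP/idP; lia.
- by rewrite (new_dst_unique new new') leqnn dle_refl.
Qed.

Hypothesis dist_old : forall y y', d y y' \in codom (emb_d f).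

Definition kext_fun y : {ffun pts X -> dst X} := [ffun x => dfloor (d (emb_pt f x) y)].

Lemma emb_kext_fun y x : emb_d f (kext_fun y x) = d (emb_pt f x) y.
Proof. by rewrite ffunE emb_dfloor. Qed.

Lemma kext_fun_emb x : kext_fun (emb_pt f x) = kpoint_fun x.
Proof. by apply/ffunP => t; rewrite !ffunE emb_dist dfloor_emb d_sym. Qed.

Lemma katetov_kext_fun y : 0 < #|pts X| -> katetov (kext_fun y).
Proof.
move=> X0; apply/katetovP; split=> // x x';
  rewrite -(drank_emb_max f) -emb_dist !emb_kext_fun; first exact: drank_ultra.
by rewrite (d_sym (emb_pt f x') y) drank_ultra.
Qed.

Definition kext_katetov (X0 : 0 < #|pts X|) y : katetov_fun X :=
  exist _ (kext_fun y) (katetov_kext_fun y X0).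

Definition kext_pt y : kpt X := insub (kext_fun y).

Lemma kext_pt_katetov (X0 : 0 < #|pts X|) y : kext_pt y = Some (kext_katetov X0 y).
Proof. exact: insubT. Qed.

Hypothesis new_pt_unique : {in [predC codom (emb_pt f)] &, forall y y', y = y'}.

Lemma kext_fun_inj : injective kext_fun.
Proof.
move=> y y' e.
have same x : d (emb_pt f x) y = d (emb_pt f x) y' by rewrite -!emb_kext_fun e.
case: (boolP (y \in codom (emb_pt f))) => [/codomP[x yx]|new].
  by apply/(d_zero _ _).1; rewrite yx -same yx dxx.
case: (boolP (y' \in codom (emb_pt f))) => [/codomP[x y'x]|new'].
  by apply/esym/(d_zero _ _).1; rewrite y'x same y'x dxx.
exact: new_pt_unique.
Qed.

Lemma kext_pt_inj : injective kext_pt.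
Proof.
move=> y y' e; apply: kext_fun_inj.
case: (posnP #|pts X|) => [X0|X0].
  by apply/ffunP => x; move/card0_eq: X0 => /(_ x); rewrite inE.
by move: e; rewrite !(kext_pt_katetov X0) => /Some_inj/(congr1 val).
Qed.

Lemma neq_codom_pt y y' : y != y' ->
  (y \in codom (emb_pt f)) || (y' \in codom (emb_pt f)).
Proof. by apply: contraR; rewrite negb_or => /andP[new new']; apply/eqP/new_pt_unique. Qed.

Lemma emb_kdist_kext (X0 : 0 < #|pts X|) y y' : y != y' ->
  emb_d f (kdist (kext_katetov X0 y) (kext_katetov X0 y')) = d y y'.
Proof.
move=> neq; rewrite emb_dmin; apply: dmin_eq => [x|] /=.
  by rewrite emb_dmax drank_max !emb_kext_fun (d_sym (emb_pt f x) y) drank_ultra.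
case/orP: (neq_codom_pt neq) => /codomP[x ->]; exists x;
  rewrite emb_dmax drank_max !emb_kext_fun drank_dxx.
- by have := drank_gt0 (d (emb_pt f x) y'); lia.
- by rewrite d_sym; have := drank_gt0 (d y (emb_pt f x)); lia.
Qed.

Lemma kext_dist y y' : kd (kext_pt y) (kext_pt y') = kext_dst (d y y').
Proof.
rewrite /kext_dst dist_old /=.
have [<-|neq] := eqVneq y y'; first by rewrite kdxx dxx -(emb_d_zero f) dfloor_emb.
have X0 : 0 < #|pts X|.
  by apply/card_gt0P; case/orP: (neq_codom_pt neq) => /codomP[x _]; exists x.
rewrite !(kext_pt_katetov X0) /=; case: eqP => [/(congr1 val)/kext_fun_inj/eqP|_].
  by rewrite (negbTE neq).
by rewrite -(emb_kdist_kext X0 neq) dfloor_emb.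
Qed.

Definition kext : dcEmb Y (katetov_space X) :=
  @Build_dcEmb Y (katetov_space X) kext_pt kext_dst kext_pt_inj kext_dst_order
    kext_dst_zero kext_dist.

Lemma kext_comp : emb_eq (dc_comp kext f) (kunit X).
Proof.
split=> [x|a] /=; last by rewrite /kext_dst dfloor_emb codom_f.
have X0 : 0 < #|pts X| by apply/card_gt0P; exists x.
by rewrite (kext_pt_katetov X0); congr Some; apply: val_inj; apply: kext_fun_emb.
Qed.

End OnePointExtension.

Lemma one_point_ext_fresh (X Y : FinUltra) (f : dcEmb X Y) : one_point_ext f ->
  [/\ {in [predC codom (emb_d f)] &, forall c c' : dst Y, c = c'},
      forall y y' : pts Y, d y y' \in codom (emb_d f) &
      {in [predC codom (emb_pt f)] &, forall y y' : pts Y, y = y'}].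
Proof.
have card1_eq (T : finType) (A : {pred T}) : #|A| = 1 -> {in A &, forall a b : T, a = b}.
  by move=> A1 a b aA bA; apply: (elimT card_le1_eqP (eq_leq A1) b a bA aA).
case=> [[[g _ fg] new_d] | [[g _ fg] new_pt]]; split; try exact: card1_eq.
- by move=> y y'; rewrite -(fg y) -(fg y') emb_dist codom_f.
- by move=> y y'; rewrite !inE -(fg y) codom_f.
- by move=> c c'; rewrite !inE -(fg c) codom_f.
- by move=> y y'; rewrite -(fg (d y y')) codom_f.
Qed.

Theorem proposition4p12 :
  exists (F : UFunctor) (eta : forall X, dcEmb X (Fobj F X)),
    natural_from_id eta /\
    forall (X Y : FinUltra) (f : dcEmb X Y), one_point_ext f ->
      exists g : dcEmb Y (Fobj F X), emb_eq (dc_comp g f) (eta X).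
Proof.
exists katetov_functor, kunit; split; first exact: kunit_natural.
move=> X Y f /one_point_ext_fresh[new_dst dist_old new_pt].
by exists (kext new_dst dist_old new_pt); apply: kext_comp.
Qed.
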